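(* Let $D$ be any distribution of $(X,A,Y)$ on $\mathcal{X}\times\{0,1\}\times\{0,1\}$ ($\mathcal{X}$ discrete), and let $\tilde D$ be its biased version with bias parameters $\beta_p,\beta_n,\nu\in(0,1)$. Let $\mathcal{H}$ be any class of classifiers $\mathcal{X}\times\{0,1\}\to\{0,1\}$, $\mathcal{H}_{\mathrm{fair,EO}}=\{f\in\mathcal{H}:TPR_0(f)=TPR_1(f)\}$ and $\widetilde{\mathcal{H}}_{\mathrm{fair,EO}}=\{f\in\mathcal{H}:\widetilde{TPR}_0(f)=\widetilde{TPR}_1(f)\}$. Then for every $h\in\mathcal{H}$, $\widetilde{TPR}_0(h)=TPR_0(h)$ and $\widetilde{TPR}_1(h)=TPR_1(h)$; hence $\mathcal{H}_{\mathrm{fair,EO}}=\widetilde{\mathcal{H}}_{\mathrm{fair,EO}}$.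
   Context: $TPR_a(f)=\Pr_D[f(X,A)=1\mid Y=1,A=a]$ and $\widetilde{TPR}_a(f)=\Pr_{\tilde D}[f(X,A)=1\mid\tilde Y=1,A=a]$. Biased distribution $\tilde D$: draw $(X,A,Y)\sim D$; points with $A=1$ are kept unchanged; points with $A=0,Y=1$ survive independently with probability $\beta_p$, points with $A=0,Y=0$ survive independently with probability $\beta_n$; each surviving point with $A=0,Y=1$ keeps label $1$ with probability $1-\nu$ and is flipped to $0$ with probability $\nu$, independently. $\tilde D$ is the distribution of the resulting $(X,A,\tilde Y)$ among surviving points. *)

From HB Require Import structures.
From mathcomp Require Import all_boot all_order all_algebra.
From mathcomp Require Import boolp classical_sets reals constructive_ereal ereal esum.
Set Implicit Arguments. Unset Strict Implicit. Unset Printing Implicit Defensive.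
Import Order.TTheory GRing.Theory Num.Theory.
Local Open Scope classical_set_scope.
Local Open Scope ring_scope.

Section Defs.
Variables (R : realType) (X : choiceType).

(* A discrete (sub-)probability mass function on X * {0,1} * {0,1};
   D x a y = Pr[X = x, A = a, Y = y].  Booleans encode {0,1} (true = 1). *)
Definition pmf := X -> bool -> bool -> R.

Definition is_distr (D : pmf) : Prop :=
  (forall x a y, 0 <= D x a y) /\
  (\esum_(t in [set: X * bool * bool]) (D t.1.1 t.1.2 t.2)%:E = 1)%E.

Definition Pr (D : pmf) (E : X -> bool -> bool -> bool) : R :=
  fine (\esum_(t in [set t : X * bool * bool | E t.1.1 t.1.2 t.2])
          (D t.1.1 t.1.2 t.2)%:E).

(* TPR_a(f) = Pr[f(X,A) = 1 | Y = 1, A = a] (ratio of probabilities;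
   the convention x / 0 = 0 of MathComp is used if the conditioning
   event has probability 0). *)
Definition TPR (D : pmf) (f : X -> bool -> bool) (a : bool) : R :=
  Pr D (fun x a' y => [&& f x a', a' == a & y]) /
  Pr D (fun x a' y => (a' == a) && y).

(* Biasing process. Survival probability of a point with (A, Y) = (a, y). *)
Definition keep (bp bn : R) (a y : bool) : R :=
  if a then 1 else if y then bp else bn.

(* Probability that a surviving point with (A,Y) = (a,y) gets observed label yt. *)
Definition relabel (nu : R) (a y yt : bool) : R :=
  if ~~ a && y then (if yt then 1 - nu else nu) else (yt == y)%:R.

(* Pr[X = x, A = a, Ytilde = yt, point survives] *)
Definition survive_mass (D : pmf) (bp bn nu : R) : pmf :=
  fun x a yt => \sum_(y : bool) D x a y * keep bp bn a y * relabel nu a y yt.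

Definition biased (D : pmf) (bp bn nu : R) : pmf :=
  fun x a yt => survive_mass D bp bn nu x a yt /
                Pr (survive_mass D bp bn nu) (fun _ _ _ => true).

End Defs.

From HB Require Import structures.
From mathcomp Require Import all_boot all_order all_algebra.
From mathcomp Require Import boolp classical_sets reals constructive_ereal ereal esum.
From mathcomp Require Import functions cardinality fsbigop.
Import Order.TTheory GRing.Theory Num.Theory.
Local Open Scope classical_set_scope.
Local Open Scope ring_scope.

(* The biasing never turns an observed label 0 into 1, so on the slice
   [A = a, Ytilde = 1] the biased mass is [D x a 1] times the constant
   [keep a 1 * relabel a 1 1 / Z], where [Z] is the survival probability.
   Both the numerator and the denominator of [TPR_a] are sums over that
   slice, so the constant cancels as soon as it is nonzero, i.e. as soon
   as [0 < Z < +oo]; this holds because [D] has a point of positive mass,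
   which survives with positive probability. *)

Section esum_scale.
Variables (R : realType) (T : choiceType).
Implicit Types (S : set T) (a : T -> \bar R).

Lemma esumZl S a (r : R) : 0 < r -> (forall t, S t -> (0 <= a t)%E) ->
  (\esum_(t in S) (r%:E * a t) = r%:E * \esum_(t in S) a t)%E.
Proof.
move=> r0 a0; rewrite /esum -ereal_sup_pZl //; congr ereal_sup.
have sumZ A : fsets S A ->
    (r%:E * \sum_(t \in A) a t = \sum_(t \in A) r%:E * a t)%E.
  move=> [finA AS]; rewrite !fsbig_finite // big_seq [in RHS]big_seq.
  by rewrite ge0_sume_distrr // => t; rewrite in_fset_set // inE => /AS /a0.
apply/seteqP; split => z /=.
- by move=> [A SA <-]; exists (\sum_(t \in A) a t)%E; [exists A | exact: sumZ].
- by move=> [w [A SA <-] <-]; exists A => //; rewrite sumZ.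
Qed.

Lemma esum_ge_term S a t : S t -> (forall i, S i -> (0 <= a i)%E) ->
  (a t <= \esum_(i in S) a i)%E.
Proof.
move=> St a0; apply: esum_ge; exists [set t]; last by rewrite fsbig_set1.
by split; [exact: finite_set1 | move=> _ ->].
Qed.

Lemma esum_gt0_witness S a : (forall t, S t -> (0 <= a t)%E) ->
  (0 < \esum_(t in S) a t)%E -> exists2 t, S t & (0 < a t)%E.
Proof.
move=> a0; apply: contraPP => noPos.
rewrite esum1 ?ltxx // => t St; apply/eqP; rewrite eq_le a0 // andbT leNgt.
by apply/negP => at0; apply: noPos; exists t.
Qed.

End esum_scale.

Lemma fine_mulEFin (R : realType) (r : R) (e : \bar R) : 0 < r ->
  fine (r%:E * e)%E = r * fine e.
Proof.
move=> r0; case: e => [x||] //=.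
- by rewrite gt0_muley ?lte_fin // mulr0.
- by rewrite gt0_muleNy ?lte_fin // mulr0.
Qed.

Section pmf_scale.
Variables (R : realType) (X : choiceType).
Implicit Type E : X -> bool -> bool -> bool.

Lemma Pr_scale (D D' : pmf R X) E (c : R) :
  0 < c -> (forall x a y, 0 <= D x a y) ->
  (forall x a y, E x a y -> D' x a y = c * D x a y) ->
  Pr D' E = c * Pr D E.
Proof.
move=> c0 D0 DD'; rewrite /Pr -fine_mulEFin // -esumZl //.
  by congr fine; apply: eq_esum => -[[x a] y] /= /DD' ->.
by move=> t _; rewrite lee_fin.
Qed.

Lemma TPR_scale (D D' : pmf R X) (f : X -> bool -> bool) (a : bool) (c : R) :
  0 < c -> (forall x a y, 0 <= D x a y) ->
  (forall x, D' x a true = c * D x a true) ->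
  TPR D' f a = TPR D f a.
Proof.
move=> c0 D0 DD'.
have onSlice E : (forall x a' y, E x a' y -> (a' == a) && y) ->
    Pr D' E = c * Pr D E.
  by move=> Eslice; apply: Pr_scale => // x a' y /Eslice /andP[/eqP -> ->].
rewrite /TPR !onSlice //; last by move=> x a' y /and3P[_ -> ->].
by rewrite invfM mulrACA mulfV ?gt_eqF // mul1r.
Qed.

End pmf_scale.

Section biased.
Variables (R : realType) (X : choiceType) (D : pmf R X) (bp bn nu : R).
Hypotheses (D_distr : is_distr D)
  (bp_range : 0 < bp <= 1) (bn_range : 0 < bn <= 1) (nu_range : 0 <= nu < 1).

Let survived := survive_mass D bp bn nu.

Lemma D_ge0 x a y : 0 <= D x a y.
Proof. by case: D_distr. Qed.

Lemma keep_gt0 a y : 0 < keep bp bn a y.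
Proof. by case/andP: bp_range; case/andP: bn_range; case: a; case: y. Qed.

Lemma keep_le1 a y : keep bp bn a y <= 1.
Proof. by case/andP: bp_range; case/andP: bn_range; case: a; case: y. Qed.

Lemma relabel_ge0 a y yt : 0 <= relabel nu a y yt.
Proof.
case/andP: nu_range => nu0 /ltW nu1.
by case: a; case: y; case: yt; rewrite //= subr_ge0.
Qed.

Lemma relabel_le1 a y yt : relabel nu a y yt <= 1.
Proof.
case/andP: nu_range => nu0 /ltW nu1.
by case: a; case: y; case: yt; rewrite //= ?lerBlDr ?lerDl.
Qed.

Lemma relabel_diag_gt0 a y : 0 < relabel nu a y y.
Proof.
by case/andP: nu_range => _ nu1; case: a; case: y; rewrite //= subr_gt0.
Qed.

Lemma survive_term_ge0 x a y yt :
  0 <= D x a y * keep bp bn a y * relabel nu a y yt.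
Proof. by rewrite !mulr_ge0 ?D_ge0 ?relabel_ge0 ?ltW ?keep_gt0. Qed.

Lemma survive_mass_ge0 x a yt : 0 <= survived x a yt.
Proof. by apply: sumr_ge0 => y _; exact: survive_term_ge0. Qed.

Lemma survive_mass_true x a :
  survived x a true = keep bp bn a true * relabel nu a true true * D x a true.
Proof.
rewrite /survived /survive_mass big_bool /=.
have -> : relabel nu a false true = 0 by case: a.
by rewrite mulr0 addr0 [RHS]mulrC mulrA.
Qed.

Lemma survive_mass_le x a yt : survived x a yt <= D x a yt + D x a (~~ yt).
Proof.
have termD y : D x a y * keep bp bn a y * relabel nu a y yt <= D x a y.
  rewrite -mulrA ler_piMr ?D_ge0 // mulr_ile1 ?keep_le1 ?relabel_le1 //.
    exact: ltW (keep_gt0 _ _).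
  exact: relabel_ge0.
rewrite /survived /survive_mass big_bool /=.
case: yt termD => termD; first exact: lerD.
by rewrite [X in _ <= X]addrC; apply: lerD.
Qed.

Lemma survive_mass_ge_diag x a y :
  D x a y * keep bp bn a y * relabel nu a y y <= survived x a y.
Proof.
rewrite /survived /survive_mass big_bool /=.
by case: y; rewrite ?lerDl ?lerDr survive_term_ge0.
Qed.

Let survival := (\esum_(t in [set: X * bool * bool])
  (survived t.1.1 t.1.2 t.2)%:E)%E.

Lemma survival_le2 : (survival <= 2%:E)%E.
Proof.
have D_sum1 :
    (\esum_(t in [set: X * bool * bool]) (D t.1.1 t.1.2 t.2)%:E = 1)%E.
  by case: D_distr.
pose flip (t : X * bool * bool) := (t.1, ~~ t.2).
have flip_bij : set_bij [set: X * bool * bool] [set: X * bool * bool] flip.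
  by rewrite setTT_bijective; exists flip => -[[x a] []].
apply: (@le_trans _ _ (\esum_(t in [set: X * bool * bool])
    ((D t.1.1 t.1.2 t.2)%:E + (D (flip t).1.1 (flip t).1.2 (flip t).2)%:E))%E).
  by apply: le_esum => t _; rewrite -EFinD lee_fin survive_mass_le.
rewrite esumD => [|t _|t _]; rewrite ?lee_fin ?D_ge0 //.
rewrite -(reindex_esum _ _ _ (fun t => (D t.1.1 t.1.2 t.2)%:E) flip_bij).
by rewrite D_sum1 -EFinD.
Qed.

Lemma survival_gt0 : (0 < survival)%E.
Proof.
have [t _ Dt_gt0] :
    exists2 t, [set: X * bool * bool] t & (0 < (D t.1.1 t.1.2 t.2)%:E)%E.
  case: D_distr => _ D_sum1; apply: esum_gt0_witness => [t _|].
    by rewrite lee_fin D_ge0.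
  by rewrite D_sum1 lte01.
rewrite lte_fin in Dt_gt0.
have survived_t_gt0 : 0 < survived t.1.1 t.1.2 t.2.
  rewrite (lt_le_trans _ (survive_mass_ge_diag _ _ _)) //.
  by rewrite !mulr_gt0 ?keep_gt0 ?relabel_diag_gt0.
apply: (lt_le_trans _ (@esum_ge_term _ _ setT
  (fun t => (survived t.1.1 t.1.2 t.2)%:E) t I _)) => [|i _].
- by rewrite lte_fin survived_t_gt0.
- by rewrite lee_fin survive_mass_ge0.
Qed.

Lemma survival_Pr_gt0 : 0 < Pr survived (fun _ _ _ => true).
Proof.
rewrite /Pr set_true -/survival.
have survival_fin : survival \is a fin_num.
  rewrite ge0_fin_numE ?(ltW survival_gt0) //.
  by rewrite (le_lt_trans survival_le2) ?ltry.
by rewrite -lte_fin fineK // survival_gt0.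
Qed.

Lemma biased_true x a : biased D bp bn nu x a true =
  keep bp bn a true * relabel nu a true true /
    Pr survived (fun _ _ _ => true) * D x a true.
Proof. by rewrite /biased -/survived survive_mass_true mulrAC. Qed.

Lemma TPR_biased f a : TPR (biased D bp bn nu) f a = TPR D f a.
Proof.
apply: (TPR_scale _ _ _ _ f a _ _ D_ge0 (biased_true ^~ a)).
by rewrite !mulr_gt0 ?keep_gt0 ?relabel_diag_gt0 ?invr_gt0 ?survival_Pr_gt0.
Qed.

End biased.

Theorem corollary3p6 (R : realType) (X : choiceType) (D : pmf R X)
    (bp bn nu : R) :
  is_distr D ->
  0 < bp < 1 -> 0 < bn < 1 -> 0 < nu < 1 ->
  forall H : set (X -> bool -> bool),
    (forall h, H h ->
       TPR (biased D bp bn nu) h false = TPR D h false /\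
       TPR (biased D bp bn nu) h true = TPR D h true) /\
    [set f | H f /\ TPR D f false = TPR D f true] =
    [set f | H f /\ TPR (biased D bp bn nu) f false =
                    TPR (biased D bp bn nu) f true].
Proof.
move=> D_distr /andP[bp0 bp1] /andP[bn0 bn1] /andP[nu0 nu1] H.
have TPR_eq f a : TPR (biased D bp bn nu) f a = TPR D f a.
  by apply: TPR_biased => //; apply/andP; split => //; exact: ltW.
split; first by move=> h _; rewrite !TPR_eq.
by apply/seteqP; split => f /= [Hf]; rewrite !TPR_eq.
Qed.
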